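(* Let $Z_1,\ldots,Z_{n+1}$ be i.i.d. from an arbitrary distribution $\mathcal P$ on $\mathbb R^p\times\mathbb R$, let $V$ be a fixed score function, and let $\alpha\in(0,1)$. Let $\tilde\alpha\in[0,1]$ be a random level that depends on the data only through the unordered multiset $\{Z_1,\ldots,Z_{n+1}\}$ (possibly also on auxiliary randomness independent of the data), and suppose that almost surely $$\text{(G1)}\qquad \frac{1}{n+1}\sum_{i=1}^{n+1}\mathbb 1\{V_i\le v^*_i\}\ \ge\ \alpha,\qquad v^*_i:=Q(\tilde\alpha;\hat{\mathcal F}_i),\ i=1,\ldots,n+1.$$ Then $\mathbb P\{V_{n+1}\le Q(\tilde\alpha;\hat{\mathcal F}_{n+1})\}\ge\alpha$, and consequently $\mathbb P\{V_{n+1}\le Q(\tilde\alpha;\hat{\mathcal F})\}\ge\alpha$.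
   Context: Data: $Z_i=(X_i,Y_i)\in\mathbb R^p\times\mathbb R$, $i=1,\ldots,n+1$; $X=\{X_1,\ldots,X_{n+1}\}$ (unordered). A localizer is a function $H(x_1,x_2,X)\in[0,1]$ of $x_1,x_2\in\mathbb R^p$ and of the unordered set $X$, satisfying $H(x,x,X)=1$ for all $x$. Write $H_{i,j}=H(X_i,X_j,X)$ and $p^H_{i,j}=H_{i,j}/\sum_{k=1}^{n+1}H_{i,k}$. For a probability distribution $\mathcal F$ on $\mathbb R\cup\{\infty\}$ and $a\in[0,1]$, $Q(a;\mathcal F)=\inf\{t:\mathbb P_{T\sim\mathcal F}(T\le t)\ge a\}$; $\delta_v$ denotes the point mass at $v$. A fixed score function is a deterministic measurable $V:\mathbb R^p\times\mathbb R\to[0,\infty)$ not depending on the data; $V_i=V(Z_i)$. Define $\hat{\mathcal F}_i=\sum_{j=1}^{n+1}p^H_{i,j}\delta_{V_j}$ for $i=1,\ldots,n+1$, and $\hat{\mathcal F}=\sum_{j=1}^{n}p^H_{n+1,j}\delta_{V_j}+p^H_{n+1,n+1}\delta_{\infty}$. *)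

From HB Require Import structures.
From mathcomp Require Import all_boot all_order all_algebra.
From mathcomp Require Import all_classical all_reals all_analysis.
From mathcomp Require Import fingroup perm.
Set Implicit Arguments. Unset Strict Implicit. Unset Printing Implicit Defensive.
Import Order.TTheory GRing.Theory Num.Theory.
Local Open Scope classical_set_scope.
Local Open Scope ring_scope.

(* Points of R^p are represented as p-tuples of reals (which carry the
   product sigma-algebra in MathComp-Analysis); a data point Z = (X,Y) lives in
   (p.-tuple R * R). *)

(* Left-continuous-inverse quantile of the finite discrete distribution
   sum_j w j * delta_{v j} on R \cup {+oo} (values in \bar R, +oo used for the
   point mass at infinity):
     Q(a; F) = inf { t in R \cup {oo} : P_{T ~ F}(T <= t) >= a },
   where P_{T~F}(T <= t) = sum_{j : v j <= t} w j. *)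
Definition quantile (R : realType) (m : nat) (w : 'I_m -> R)
    (v : 'I_m -> \bar R) (a : R) : \bar R :=
  ereal_inf [set t : \bar R | t != -oo%E /\ a <= \sum_(j < m | (v j <= t)%E) w j].

Definition pH (R : realType) (p n : nat)
    (H : p.-tuple R -> p.-tuple R -> n.-tuple (p.-tuple R) -> R)
    (x : n.-tuple (p.-tuple R)) (i j : 'I_n) : R :=
  H (tnth x i) (tnth x j) x / \sum_(k < n) H (tnth x i) (tnth x k) x.

Definition tperm_tuple (T : Type) (n : nat) (s : 'S_n) (t : n.-tuple T)
  : n.-tuple T := [tuple tnth t (s i) | i < n].

Definition localizer (R : realType) (p n : nat)
    (H : p.-tuple R -> p.-tuple R -> n.-tuple (p.-tuple R) -> R) : Prop :=
  [/\ forall x1 x2 X, 0 <= H x1 x2 X <= 1,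
      forall x X, H x x X = 1 &
      forall x1 x2 X (s : 'S_n), H x1 x2 (tperm_tuple s X) = H x1 x2 X].

(* Z_1,...,Z_n are i.i.d. with common law mu, and jointly independent of the
   auxiliary random element W (product rule on all measurable rectangles). *)
Definition iid_indep_aux (R : realType) (d : measure_display)
    (Omega : measurableType d) (P : probability Omega R)
    (dT : measure_display) (T : measurableType dT) (mu : probability T R)
    (dU : measure_display) (U : measurableType dU)
    (n : nat) (Z : 'I_n -> Omega -> T) (W : Omega -> U) : Prop :=
  forall (A : 'I_n -> set T) (B : set U),
    (forall i, measurable (A i)) -> measurable B ->
    P ((\bigcap_(i in [set: 'I_n]) (Z i @^-1` A i)) `&` (W @^-1` B)) =
    ((\prod_(i < n) mu (A i)) * P (W @^-1` B))%E.

From HB Require Import structures.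
From mathcomp Require Import all_boot all_order all_algebra.
From mathcomp Require Import all_classical all_reals all_analysis.
From mathcomp Require Import fingroup perm.
From mathcomp Require Import measurable_realfun.
Import Order.TTheory GRing.Theory Num.Theory.
Local Open Scope classical_set_scope.
Local Open Scope ring_scope.

Set Implicit Arguments.
Unset Strict Implicit.
Unset Printing Implicit Defensive.

(* Let E_i be the event V_i <= Q(atil; F_i).  Clearing the normalization of
   the localizer weights turns E_i into a measurable event of the data (Z, W),
   and relabelling the data by a permutation s turns E_i into E_(s i), since H
   and atil only see the data as a multiset.  i.i.d. data independent of W is
   exchangeable (the laws of (Z o s, W) and (Z, W) agree on the pi-system of
   rectangles), so all E_i have the same probability, and integrating (G1)
   gives alpha <= (n+1)^-1 sum_i P(E_i) = P(E_(n+1)).  Finally x <= Q(a; F)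
   only depends on the mass strictly below x, which is the same for F_(n+1)
   and for F, where the atom V_(n+1) is moved to +oo. *)

Section tuple_rects.
Context dT (T : measurableType dT) dU (U : measurableType dU) (N : nat).

Definition tuple_rect (A : 'I_N -> set T) (B : set U) : set (N.-tuple T * U) :=
  [set q | (forall i, A i (tnth q.1 i)) /\ B q.2].

Definition tuple_rects : set (set (N.-tuple T * U)) :=
  [set E | exists (A : 'I_N -> set T) (B : set U),
     [/\ forall i, measurable (A i), measurable B & E = tuple_rect A B]].

Lemma tuple_rects_measurable : tuple_rects `<=` measurable.
Proof.
move=> _ [A [B [mA mB ->]]].
have -> : tuple_rect A B = (\bigcap_(i in [set: 'I_N])
    (fst @^-1` ((fun t => tnth t i) @^-1` A i))) `&` (snd @^-1` B).
  by apply/seteqP; split=> q /= [hA hB]; split=> // i; [move=> _|]; exact: hA.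
apply: measurableI; last by rewrite -[X in measurable X]setTI; exact: measurable_snd.
apply: fin_bigcap_measurable => // i _.
rewrite -[X in measurable X]setTI; apply: measurable_fst => //.
by rewrite -[X in measurable X]setTI; exact: measurable_tnth.
Qed.

Lemma measurable_tuple_rects : measurable = <<s tuple_rects >>.
Proof.
apply/seteqP; split; last first.
  apply: smallest_sub; first exact: sigma_algebra_measurable.
  exact: tuple_rects_measurable.
pose TG := g_sigma_algebraType tuple_rects.
have mid : measurable_fun [set: TG] (id : TG -> N.-tuple T * U).
  apply/measurable_fun_pairP; split.
    apply/measurable_fun_tnthP => i _ A mA; apply: sub_sigma_algebra.
    exists (fun j => if j == i then A else setT), setT; split=> //.
      by move=> j; case: ifP.
    apply/seteqP; split=> q /=; first by move=> [_ h]; split=> // j; case: eqP => [->|].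
    by move=> [h _]; split=> //; have := h i; rewrite eqxx.
  move=> _ B mB; apply: sub_sigma_algebra.
  exists (fun _ => setT), B; split=> //.
  by apply/seteqP; split=> q /= [].
by move=> E mE; have := mid measurableT E mE; rewrite setTI.
Qed.

Lemma setI_closed_tuple_rects : setI_closed tuple_rects.
Proof.
move=> _ _ [A [B [mA mB ->]]] [A' [B' [mA' mB' ->]]].
exists (fun i => A i `&` A' i), (B `&` B'); split.
- by move=> i; exact: measurableI.
- exact: measurableI.
apply/seteqP; split=> q /=; first by move=> [[h1 h2] [h3 h4]]; split=> // i; split.
by move=> [h [h1 h2]]; split; split=> // i; have [] := h i.
Qed.

Lemma tuple_rectsT : tuple_rects setT.
Proof. by exists (fun _ => setT), setT; split=> //; apply/seteqP; split. Qed.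

End tuple_rects.
Arguments tuple_rects {dT} T {dU} U N.

Section exchangeability.
Context (R : realType) d (Omega : measurableType d) (P : probability Omega R)
  dT (T : measurableType dT) (mu : probability T R) dU (U : measurableType dU)
  (N : nat) (Z : 'I_N -> Omega -> T) (W : Omega -> U).
Hypotheses (mZ : forall i, measurable_fun setT (Z i)) (mW : measurable_fun setT W).
Hypothesis iidZW : iid_indep_aux P mu Z W.

Definition permuted_data (s : 'S_N) (w : Omega) : N.-tuple T * U :=
  (tperm_tuple s [tuple Z i w | i < N], W w).

Lemma tnth_permuted_data s w i : tnth (permuted_data s w).1 i = Z (s i) w.
Proof. by rewrite !tnth_mktuple. Qed.

Lemma permuted_data1 w : permuted_data 1 w = ([tuple Z i w | i < N], W w).
Proof.
by congr (_, _); apply: eq_from_tnth => i; rewrite tnth_permuted_data perm1 tnth_mktuple.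
Qed.

Lemma measurable_permuted_data s : measurable_fun setT (permuted_data s).
Proof.
apply: measurable_fun_pair => //; apply/measurable_fun_tnthP => i.
rewrite (_ : _ \o _ = Z (s i)); first exact: mZ.
by apply: funext => w /=; rewrite -tnth_permuted_data.
Qed.

Lemma permuted_data_rect s A B : (forall i, measurable (A i)) -> measurable B ->
  P (permuted_data s @^-1` tuple_rect A B) =
  ((\prod_(i < N) mu (A i)) * P (W @^-1` B))%E.
Proof.
move=> mA mB.
have -> : permuted_data s @^-1` tuple_rect A B =
    (\bigcap_(i in [set: 'I_N]) (Z i @^-1` A (s^-1 i)%g)) `&` (W @^-1` B).
  apply/seteqP; split=> w /= [hA hB]; split=> // i.
    by move=> _; have := hA (s^-1 i)%g; rewrite tnth_permuted_data permKV.
  by rewrite tnth_permuted_data; have := hA (s i) I; rewrite /= permK.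
rewrite iidZW //; congr (_ * _)%E.
by rewrite [RHS](reindex_inj (@perm_inj _ s^-1)%g).
Qed.

Lemma permuted_data_law s E : measurable E ->
  P (permuted_data s @^-1` E) = P (permuted_data 1 @^-1` E).
Proof.
move=> mE.
apply: (measure_unique (tuple_rects T U N) (fun _ => setT)
  (measurable_tuple_rects T U N) (@setI_closed_tuple_rects _ T _ U N)
  (fun _ => tuple_rectsT T U N) (bigcup_const _ (ex_intro _ 0%N I))
  (pushforward P (permuted_data s)) (pushforward P (permuted_data 1))) => //;
  try exact: measurable_permuted_data.
- move=> ? ? _ [A [B [mA mB ->]]].
  exact: etrans (permuted_data_rect _ mA mB) (esym (permuted_data_rect _ mA mB)).
- by move=> ? _; rewrite [X in (X < _)%E](_ : _ = P setT) // probability_setT ltry.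
Qed.

Lemma exchangeable_events_eq (ev : 'I_N -> pred (N.-tuple T * U)) i j :
  (forall k, measurable [set q | ev k q]) ->
  (forall (s : 'S_N) k t u, ev k (tperm_tuple s t, u) = ev (s k) (t, u)) ->
  P (permuted_data 1 @^-1` [set q | ev i q]) =
  P (permuted_data 1 @^-1` [set q | ev j q]).
Proof.
move=> mev evP; rewrite -(permuted_data_law (tperm i j) (mev j)).
congr (P _); apply/seteqP; split=> w /=;
  by rewrite /permuted_data !evP perm1 tpermR.
Qed.

End exchangeability.

Lemma mean_indicator_le_prob (R : realType) d (Omega : measurableType d)
    (P : probability Omega R) (N : nat) (b : 'I_N.+1 -> Omega -> bool)
    (alpha : R) j :
  (forall i, measurable [set w | b i w]) ->
  (forall i, P [set w | b i w] = P [set w | b j w]) ->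
  {ae P, forall w, alpha <= N.+1%:R^-1 * \sum_(i < N.+1) (b i w)%:R} ->
  (alpha%:E <= P [set w | b j w])%E.
Proof.
move=> mb Pb hae; have [alpha_le0|alpha_gt0] := leP alpha 0.
  by apply: le_trans (measure_ge0 _ _); rewrite lee_fin.
pose E i := [set w | b i w].
have indE i w : \1_(E i) w = (b i w)%:R :> R.
  rewrite indicE; case: (boolP (b i w)) => h; first by rewrite mem_set.
  by rewrite memNset //; apply/negP.
have mindic i : measurable_fun setT (fun w => (\1_(E i) w)%:E).
  by apply/measurable_EFinP; exact: measurable_indic (mb i).
have intE : (\int[P]_(w in setT) (\sum_(i < N.+1) (\1_(E i) w)%:E) =
             \sum_(i < N.+1) P (E i))%E.
  rewrite ge0_integral_sum //; apply: eq_bigr => i _.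
  by rewrite integral_indic ?setIT //; exact: mb.
have intP : (\int[P]_(w in setT) (N.+1%:R * alpha)%:E = (N.+1%:R * alpha)%:E)%E.
  rewrite integral_cst // [X in (_ * X)%E](_ : _ = 1%E) ?mule1 //.
  exact: probability_setT.
have : ((N.+1%:R * alpha)%:E <= \sum_(i < N.+1) P (E i))%E.
  rewrite -intP -intE; apply: ae_ge0_le_integral => //.
  - by move=> w _; rewrite lee_fin mulr_ge0 ?ltW.
  - by move=> w _; apply: sume_ge0 => i _; rewrite lee_fin indicE.
  - exact: emeasurable_sum.
  apply: filterS hae => w hw _.
  rewrite sumEFin lee_fin -ler_pdivlMl ?ltr0Sn //.
  by under eq_bigr do rewrite indE.
rewrite (eq_bigr _ (fun i _ => Pb i)) -(fineK (fin_num_measure P _ (mb j))).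
rewrite sumEFin sumr_const card_ord !lee_fin.
by rewrite -[fine _ *+ _]mulr_natl ler_pM2l ?ltr0Sn.
Qed.

Lemma le_quantile (R : realType) m (w : 'I_m -> R) (v : 'I_m -> \bar R) (x a : R) :
  (forall j, 0 <= w j) ->
  (x%:E <= quantile w v a)%E = (\sum_(j < m | (v j < x%:E)%E) w j < a).
Proof.
move=> w0; apply/idP/idP => [hx|hs].
- rewrite ltNge; apply/negP => ha.
  pose t := \big[Order.max/(x - 1)%:E]_(j < m | (v j < x%:E)%E) v j.
  have tx : (t < x%:E)%E by apply: bigmax_lt => // ; rewrite lte_fin gtrBl.
  have tq : (quantile w v a <= t)%E.
    apply: ereal_inf_lbound; split.
      have := bigmax_ge_id (index_enum 'I_m) (x - 1)%:E (fun j => (v j < x%:E)%E) v.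
      by move/(lt_le_trans (ltNyr _)) => /gt_eqF ->.
    apply: (le_trans ha); rewrite [leRHS]big_mkcond [leLHS]big_mkcond /=.
    apply: ler_sum => j _; case: ifP => vj; last by case: ifP.
    by rewrite (_ : (v j <= t)%E) //; exact: le_bigmax_cond.
  by have := le_trans hx tq; rewrite leNgt tx.
- apply: le_ereal_inf_tmp => t [_ hat]; rewrite leNgt; apply/negP => tx.
  suff : \sum_(j < m | (v j <= t)%E) w j <= \sum_(j < m | (v j < x%:E)%E) w j.
    by move=> /(le_trans hat)/(le_lt_trans)/(_ hs); rewrite ltxx.
  rewrite [leRHS]big_mkcond [leLHS]big_mkcond /=.
  apply: ler_sum => j _; case: ifP => vj; last by case: ifP.
  by rewrite (le_lt_trans vj tx).
Qed.

Lemma le_quantile_congr (R : realType) m (w : 'I_m -> R) (v v' : 'I_m -> \bar R)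
    (x a : R) :
  (forall j, 0 <= w j) -> (forall j, (v j < x%:E)%E = (v' j < x%:E)%E) ->
  (x%:E <= quantile w v a)%E = (x%:E <= quantile w v' a)%E.
Proof. by move=> w0 vv'; rewrite !le_quantile //; under eq_bigl do rewrite vv'. Qed.

Section weighted_rank.
Context (R : realType) (p n : nat) dU (U : measurableType dU).
Variables (V : p.-tuple R * R -> R)
  (H : p.-tuple R -> p.-tuple R -> n.+1.-tuple (p.-tuple R) -> R)
  (g : n.+1.-tuple (p.-tuple R * R) -> U -> R).
Local Notation obs := (n.+1.-tuple (p.-tuple R * R) * U)%type.

Definition covariates (t : n.+1.-tuple (p.-tuple R * R)) : n.+1.-tuple (p.-tuple R) :=
  [tuple (tnth t k).1 | k < n.+1].

Definition loc_weight t (i j : 'I_n.+1) : R :=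
  H (tnth t i).1 (tnth t j).1 (covariates t).

(* The event [V_i <= Q(g; F_i)], with the normalizing sum of the weights [pH] cleared. *)
Definition rank_event (i : 'I_n.+1) (q : obs) : bool :=
  \sum_(j < n.+1 | V (tnth q.1 j) < V (tnth q.1 i)) loc_weight q.1 i j <
  g q.1 q.2 * \sum_(k < n.+1) loc_weight q.1 i k.

Lemma covariates_mktuple (z : 'I_n.+1 -> p.-tuple R * R) :
  covariates [tuple z k | k < n.+1] = [tuple (z k).1 | k < n.+1].
Proof. by apply: eq_from_tnth => k; rewrite !tnth_mktuple. Qed.

Hypothesis localizerH : localizer H.

Lemma loc_weight_ge0 t i j : 0 <= loc_weight t i j.
Proof.
case: localizerH => H01 _ _.
by have /andP[] := H01 (tnth t i).1 (tnth t j).1 (covariates t).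
Qed.

Lemma loc_mass_gt0 t i : 0 < \sum_(k < n.+1) loc_weight t i k.
Proof.
case: localizerH => _ H11 _; rewrite (bigD1 i) //= {1}/loc_weight H11.
by rewrite ltr_pwDl // sumr_ge0 // => k _; exact: loc_weight_ge0.
Qed.

Lemma pH_covariates t i j :
  pH H (covariates t) i j = loc_weight t i j / \sum_(k < n.+1) loc_weight t i k.
Proof.
by rewrite /pH /loc_weight !tnth_mktuple; under eq_bigr do rewrite tnth_mktuple.
Qed.

Lemma pH_ge0 t i j : 0 <= pH H (covariates t) i j.
Proof. by rewrite pH_covariates divr_ge0 ?loc_weight_ge0 ?ltW ?loc_mass_gt0. Qed.

Lemma le_quantile_rank_event t u i :
  ((V (tnth t i))%:E <=
     quantile (pH H (covariates t) i) (fun j => (V (tnth t j))%:E) (g t u))%E =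
  rank_event i (t, u).
Proof.
rewrite le_quantile => [|j]; last exact: pH_ge0.
under eq_bigl do rewrite lte_fin.
by under eq_bigr do rewrite pH_covariates; rewrite -mulr_suml ltr_pdivrMr ?loc_mass_gt0.
Qed.

Lemma rank_event_perm (s : 'S_n.+1) i t u :
  (forall t u, g (tperm_tuple s t) u = g t u) ->
  rank_event i (tperm_tuple s t, u) = rank_event (s i) (t, u).
Proof.
move=> gperm; case: localizerH => _ _ Hperm.
have tnthP k : tnth (tperm_tuple s t) k = tnth t (s k) by rewrite tnth_mktuple.
have weightP a b : loc_weight (tperm_tuple s t) a b = loc_weight t (s a) (s b).
  rewrite /loc_weight !tnthP (_ : covariates _ = tperm_tuple s (covariates t)) ?Hperm //.
  by apply: eq_from_tnth => k; rewrite !tnth_mktuple.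
rewrite /rank_event /= gperm; congr (_ < _ * _);
  rewrite [RHS](reindex_inj (@perm_inj _ s));
  by apply: eq_big => [j|j _]; rewrite ?tnthP ?weightP.
Qed.

Lemma measurable_rank_event i :
  measurable_fun setT V ->
  measurable_fun setT
    (fun q : (p.-tuple R * p.-tuple R) * n.+1.-tuple (p.-tuple R) => H q.1.1 q.1.2 q.2) ->
  measurable_fun setT (fun q : obs => g q.1 q.2) ->
  measurable [set q | rank_event i q].
Proof.
move=> mV mH mg.
have mtnth j : measurable_fun setT (fun q : obs => tnth q.1 j).
  exact: measurableT_comp (measurable_tnth j) measurable_fst.
have mcov : measurable_fun setT (fun q : obs => covariates q.1).
  apply/measurable_fun_tnthP => k.
  rewrite (_ : _ \o _ = fun q => (tnth q.1 k).1); last first.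
    by apply: funext => q /=; rewrite tnth_mktuple.
  exact: measurableT_comp measurable_fst (mtnth k).
have mweight j k : measurable_fun setT (fun q : obs => loc_weight q.1 j k).
  apply: measurableT_comp mH (measurable_fun_pair (measurable_fun_pair _ _) mcov).
    exact: measurableT_comp measurable_fst (mtnth j).
  exact: measurableT_comp measurable_fst (mtnth k).
suff /(_ measurableT [set true] I) : measurable_fun setT (rank_event i).
  by rewrite setTI (_ : _ @^-1` _ = [set q | rank_event i q]) //; apply/seteqP; split.
apply: measurable_fun_ltr.
  rewrite (_ : (fun q => _) = fun q => \sum_(j < n.+1)
    (if V (tnth q.1 j) < V (tnth q.1 i) then loc_weight q.1 i j else 0)); last first.
    by apply: funext => q; rewrite big_mkcond.
  apply: measurable_sum => j; apply: measurable_fun_ifT => //.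
  by apply: measurable_fun_ltr; exact: measurableT_comp mV (mtnth _).
by apply: measurable_funM => //; exact: measurable_sum.
Qed.

End weighted_rank.

Theorem corollary1 (R : realType) (p n : nat)
  (d : measure_display) (Omega : measurableType d) (P : probability Omega R)
  (dU : measure_display) (U : measurableType dU)
  (Z : 'I_n.+1 -> Omega -> (p.-tuple R * R)%type) (W : Omega -> U)
  (V : (p.-tuple R * R)%type -> R)
  (H : p.-tuple R -> p.-tuple R -> n.+1.-tuple (p.-tuple R) -> R)
  (g : n.+1.-tuple (p.-tuple R * R)%type -> U -> R)
  (alpha : R) :
  (forall i, measurable_fun setT (Z i)) ->
  measurable_fun setT W ->
  (exists mu : probability (p.-tuple R * R)%type R, iid_indep_aux P mu Z W) ->
  measurable_fun setT V ->
  (forall z, 0 <= V z) ->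
  localizer H ->
  measurable_fun setT
    (fun q : (p.-tuple R * p.-tuple R) * n.+1.-tuple (p.-tuple R) =>
       H q.1.1 q.1.2 q.2) ->
  (forall t u (s : 'S_n.+1), g (tperm_tuple s t) u = g t u) ->
  (forall t u, 0 <= g t u <= 1) ->
  measurable_fun setT (fun q : n.+1.-tuple (p.-tuple R * R)%type * U => g q.1 q.2) ->
  0 < alpha < 1 ->
  let Zt w := [tuple Z i w | i < n.+1] in
  let Xt w := [tuple (Z i w).1 | i < n.+1] in
  let atil w := g (Zt w) (W w) in
  let vstar (i : 'I_n.+1) w :=
    quantile (pH H (Xt w) i) (fun j => (V (Z j w))%:E) (atil w) in
  let vhat w :=
    quantile (pH H (Xt w) ord_max)
      (fun j => if j == ord_max then +oo%E else (V (Z j w))%:E) (atil w) in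
  {ae P, forall w,
     alpha <= (n.+1)%:R^-1 * \sum_(i < n.+1) ((V (Z i w))%:E <= vstar i w)%E%:R} ->
  (alpha%:E <= P [set w | ((V (Z ord_max w))%:E <= vstar ord_max w)%E])%E /\
  (alpha%:E <= P [set w | ((V (Z ord_max w))%:E <= vhat w)%E])%E.
Proof.
move=> mZ mW [mu iidZW] mV _ locH mH gperm _ mg _ Zt Xt atil vstar vhat hae.
have vstarE i w : ((V (Z i w))%:E <= vstar i w)%E = rank_event V H g i (Zt w, W w).
  rewrite -le_quantile_rank_event // covariates_mktuple tnth_mktuple.
  by congr (_ <= quantile _ _ _)%E; apply: funext => j; rewrite tnth_mktuple.
pose event i := [set w | ((V (Z i w))%:E <= vstar i w)%E].
have eventE i : event i = permuted_data Z W 1 @^-1` [set q | rank_event V H g i q].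
  by apply/seteqP; split=> w; rewrite /event /= vstarE permuted_data1.
have mevent i : measurable (event i).
  rewrite eventE -[X in measurable X]setTI.
  apply: (measurable_permuted_data mZ mW 1) => //.
  exact: measurable_rank_event.
have Pevent i : P (event i) = P (event ord_max).
  rewrite !eventE; apply: (exchangeable_events_eq mZ mW iidZW).
  - by move=> k; exact: measurable_rank_event.
  - by move=> s k t u; exact: rank_event_perm.
have vstar_ge : (alpha%:E <= P (event ord_max))%E.
  exact: (mean_indicator_le_prob (b := fun i w => ((V (Z i w))%:E <= vstar i w)%E)
            mevent Pevent hae).
have vhatE w :
    ((V (Z ord_max w))%:E <= vhat w)%E = ((V (Z ord_max w))%:E <= vstar ord_max w)%E.
  apply: le_quantile_congr => j.
    by rewrite /Xt -(covariates_mktuple (fun k => Z k w)) pH_ge0.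
  by case: eqP => [->|]; rewrite ?ltxx.
split=> //; rewrite (_ : [set w | _] = event ord_max) //.
by apply/seteqP; split=> w; rewrite /= vhatE.
Qed.
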